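(* Let $\mathscr{V}_3$ be the variety of triples $(\mathcal{C}_1,\mathcal{C}_2,\mathcal{C}_3)$ of conics in $\mathbb{P}^3$ (over $\mathbb{C}$) that lie on a common nondegenerate quadric surface. For $\{i,j,k\}=\{1,2,3\}$ define the rational function $\alpha_i^2$ on $\mathscr{V}_3$ by $$\alpha_i^2=\frac{(\boldsymbol{\ell}_{ij}^T C_i^{*}\boldsymbol{\ell}_{ik})^2}{(\boldsymbol{\ell}_{ij}^T C_i^{*}\boldsymbol{\ell}_{ij})(\boldsymbol{\ell}_{ik}^T C_i^{*}\boldsymbol{\ell}_{ik})},$$ where, after choosing homogeneous coordinates identifying the plane $\mathcal{P}_i$ of $\mathcal{C}_i$ with $\mathbb{P}^2$, $C_i$ is a symmetric $3\times3$ matrix of $\mathcal{C}_i$, $C_i^{*}$ is its adjugate, and $\boldsymbol{\ell}_{ij},\boldsymbol{\ell}_{ik}\in\mathbb{C}^3$ are coordinate vectors of the lines $\mathcal{P}_i\cap\mathcal{P}_j$ and $\mathcal{P}_i\cap\mathcal{P}_k$ in $\mathcal{P}_i$ (the value does not depend on these choices). Then $\alpha_1^2,\alpha_2^2,\alpha_3^2$ are algebraically independent over $\mathbb{C}$.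
   Context: A conic in $\mathbb{P}^3$ is a nondegenerate conic lying in a plane; here the three planes $\mathcal{P}_1,\mathcal{P}_2,\mathcal{P}_3$ are the planes of the three conics. A line $\boldsymbol{\ell}$ in $\mathbb{P}^2$ is represented by $\boldsymbol{\ell}\in\mathbb{C}^3$ with the line being $\{\bar{x}:\boldsymbol{\ell}^T\bar{x}=0\}$; $\boldsymbol{\ell}^TC^*\boldsymbol{\ell}=0$ iff $\boldsymbol{\ell}$ is tangent to the conic $\bar{x}^TC\bar{x}=0$. A nondegenerate quadric surface is the zero set of a quadratic form in 4 variables with nonsingular matrix. *)

From HB Require Import structures.
From mathcomp Require Import all_boot all_order all_algebra.
From mathcomp Require Import reals.
From mathcomp Require Import complex.
From mathcomp Require Import mpoly.

Set Implicit Arguments.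
Unset Strict Implicit.
Unset Printing Implicit Defensive.

Import Order.TTheory GRing.Theory Num.Theory.
Local Open Scope ring_scope.

(* Convention: P^3 = P(C^4), a plane of P^3 is represented by a rank-3
   matrix M : 'M_(4,3) whose columns span the corresponding 3-dimensional
   subspace of C^4 (this fixes homogeneous coordinates x in C^3 on the plane,
   x |-> M x).  A conic in that plane is given by a symmetric 3x3 matrix Cm
   with nonzero determinant: its points are [M x] with x^T Cm x = 0. *)

Section Defs.
Variable K : fieldType.

Definition qform {n} (A : 'M[K]_n) (x y : 'cV[K]_n) : K := (x^T *m A *m y) 0 0.

Definition plane_conic (M : 'M[K]_(4,3)) (Cm : 'M[K]_3) : Prop :=
  \rank M = 3%N /\ Cm^T = Cm /\ \det Cm != 0.

Definition nondeg_quadric (Q : 'M[K]_4) : Prop := Q^T = Q /\ \det Q != 0.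

Definition conic_on_quadric (Q : 'M[K]_4) (M : 'M[K]_(4,3)) (Cm : 'M[K]_3) : Prop :=
  forall x : 'cV[K]_3, qform Cm x x = 0 -> qform Q (M *m x) (M *m x) = 0.

(* l is a coordinate vector (in the coordinates of plane Mi) of the line
   (plane Mi) \cap (plane Mj): the line {x | l^T x = 0} equals the set of x
   with M_i x in the span of the columns of M_j. *)
Definition line_coord (Mi Mj : 'M[K]_(4,3)) (l : 'cV[K]_3) : Prop :=
  l != 0 /\
  forall x : 'cV[K]_3, (l^T *m x) 0 0 = 0 <-> (((Mi *m x)^T) <= Mj^T)%MS.

Definition alpha2 (Cm : 'M[K]_3) (lj lk : 'cV[K]_3) : K :=
  (qform (\adj Cm) lj lk) ^+ 2 / (qform (\adj Cm) lj lj * qform (\adj Cm) lk lk).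

End Defs.

From HB Require Import structures.
From mathcomp Require Import all_boot all_order all_algebra.
From mathcomp Require Import reals.
From mathcomp Require Import complex.
From mathcomp Require Import mpoly.
From mathcomp Require Import zify ring lra.
Import Order.TTheory GRing.Theory Num.Theory.
Local Open Scope ring_scope.

(* Take the quadric [X0^2 + X1^2 + X2^2 + X3^2 + 2 x0 X1 X2 + 2 x1 X0 X2 +
   2 x2 X0 X1 = 0] and the coordinate planes [Xi = 0], i < 3.  In the
   coordinates left over, the conic cut on [Xi = 0] has matrix
   [1 xi 0; xi 1 0; 0 0 1] and the two other planes cut it along coordinate
   axes, so alpha_i^2 = xi^2.  For small nonnegative reals xi both the conics
   and the quadric are nondegenerate, so it suffices that a nonzero P cannot
   vanish at every (t, t^D, t^(D^2)) with t from an infinite set: by Kronecker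
   substitution with D = msize P, P(t, t^D, t^(D^2)) is a nonzero univariate
   polynomial in t. *)

Lemma sum_digits_inj (D n : nat) (d1 d2 : 'I_n -> nat) :
  (forall i, d1 i < D)%N -> (forall i, d2 i < D)%N ->
  (\sum_i d1 i * D ^ i = \sum_i d2 i * D ^ i)%N -> d1 =1 d2.
Proof.
elim: n d1 d2 => [|n IHn] d1 d2 lt1 lt2 E i; first by case: i.
have D_gt0 : (0 < D)%N by apply: leq_ltn_trans (lt1 ord0).
have shift (d : 'I_n.+1 -> nat) : (\sum_i d i * D ^ i =
    d ord0 + \sum_(i < n) d (lift ord0 i) * D ^ i * D)%N.
  rewrite big_ord_recl expn0 muln1; congr (_ + _)%N.
  by apply: eq_bigr => j _; rewrite expnS mulnCA mulnC.
rewrite !shift -!big_distrl /= in E.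
have [E0 E1] : d1 ord0 = d2 ord0 /\
    (\sum_(j < n) d1 (lift ord0 j) * D ^ j = \sum_(j < n) d2 (lift ord0 j) * D ^ j)%N.
  move: (congr1 (modn^~ D) E) (congr1 (divn^~ D) E) => /=.
  rewrite !(addnC (_ ord0)) !modnMDl !divnMDl // !modn_small ?divn_small //.
  by rewrite !addn0.
case: (unliftP ord0 i) => [j ->|->] //.
exact: (IHn (fun j => d1 (lift ord0 j)) (fun j => d2 (lift ord0 j))).
Qed.

Section KroneckerSubstitution.
Context {F : idomainType} {n : nat}.
Implicit Type P : {mpoly F[n]}.

Definition kronecker_exp P (m : 'X_{1..n}) : nat := (\sum_i m i * msize P ^ i)%N.

Definition kronecker P : {poly F} :=
  \sum_(m <- msupp P) P@_m *: 'X^(kronecker_exp P m).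

Lemma mnm_lt_msize P m i : m \in msupp P -> (m i < msize P)%N.
Proof.
move/msize_mdeg_lt; apply: leq_ltn_trans.
by rewrite mdegE (bigD1 i) //= leq_addr.
Qed.

Lemma kronecker_exp_inj P : {in msupp P &, injective (kronecker_exp P)}.
Proof.
move=> m1 m2 m1P m2P /sum_digits_inj E; apply/mnmP/E => i; exact: mnm_lt_msize.
Qed.

Lemma horner_kronecker P s : (kronecker P).[s] = P.@[fun i => s ^+ (msize P ^ i)].
Proof.
rewrite mevalE horner_sum; apply: eq_bigr => m _.
rewrite hornerZ hornerXn expr_sum; congr (_ * _).
by apply: eq_bigr => i _; rewrite -exprM mulnC.
Qed.

Lemma coef_kronecker P m : m \in msupp P -> (kronecker P)`_(kronecker_exp P m) = P@_m.
Proof.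
move=> mP; rewrite coef_sum (bigD1_seq m) ?msupp_uniq //= coefZ coefXn eqxx mulr1.
rewrite big_seq_cond big1 ?addr0 // => m' /andP[m'P m'm].
rewrite coefZ coefXn; case: eqP => [/(@kronecker_exp_inj P _ _ mP m'P) E|]; last by rewrite mulr0.
by rewrite E eqxx in m'm.
Qed.

Lemma kronecker_eq0 P : (kronecker P == 0) = (P == 0).
Proof.
apply/idP/idP => [|/eqP ->]; last by rewrite /kronecker msupp0 big_nil.
apply: contraLR; rewrite -msupp_eq0; case E: (msupp P) => [|m r] // _.
have mP : m \in msupp P by rewrite E mem_head.
apply/eqP => /(congr1 (fun q : {poly F} => q`_(kronecker_exp P m))).
by rewrite coef_kronecker // coef0 => /eqP; rewrite mcoeff_eq0 mP.
Qed.

Lemma meval_geometric_neq0 P (t : nat -> F) : injective t -> P != 0 ->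
  exists k, P.@[fun i => t k ^+ (msize P ^ i)] != 0.
Proof.
move=> t_inj P_neq0; have K_neq0 : kronecker P != 0 by rewrite kronecker_eq0.
have : ~~ all (root (kronecker P)) (map t (iota 0 (size (kronecker P)))).
  apply/negP => /(max_poly_roots K_neq0).
  by rewrite map_inj_uniq ?iota_uniq // size_map size_iota ltnn => /(_ isT).
by case/allPn => _ /mapP[k _ ->]; rewrite /root horner_kronecker; exists k.
Qed.

End KroneckerSubstitution.

Section CoordinatePlanes.
Context {F : fieldType} {n : nat}.
Implicit Type w : 'I_n.+1.

Definition coord_plane w : 'M[F]_(n.+1, n) := \matrix_(r, p) (r == lift w p)%:R.

Lemma coord_planeT_mul w m (A : 'M[F]_(n.+1, m)) p q :
  ((coord_plane w)^T *m A) p q = A (lift w p) q.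
Proof.
rewrite mxE (bigD1 (lift w p)) //= !mxE eqxx mul1r big1 ?addr0 // => r /negbTE r_neq.
by rewrite !mxE r_neq mul0r.
Qed.

Lemma mul_coord_plane w m (A : 'M[F]_(m, n.+1)) r p : (A *m coord_plane w) r p = A r (lift w p).
Proof.
rewrite mxE (bigD1 (lift w p)) //= !mxE eqxx mulr1 big1 ?addr0 // => s /negbTE s_neq.
by rewrite !mxE s_neq mulr0.
Qed.

Lemma coord_plane_mulT w r s :
  (coord_plane w *m (coord_plane w)^T) r s = ((r == s) && (r != w))%:R.
Proof.
rewrite mxE; case: (unliftP w r) => [p ->|->]; last first.
  by rewrite eqxx andbF big1 // => q _; rewrite !mxE (negbTE (neq_lift _ _)) mul0r.
rewrite (bigD1 p) //= !mxE eqxx mul1r big1 => [|q /negbTE q_neq]; last first.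
  by rewrite !mxE (inj_eq (@lift_inj _ w)) eq_sym q_neq mul0r.
by rewrite addr0 lift_eqF andbT eq_sym.
Qed.

Lemma coord_planeTK w : (coord_plane w)^T *m coord_plane w = 1%:M.
Proof.
by apply/matrixP => p q; rewrite coord_planeT_mul !mxE (inj_eq (@lift_inj _ w)).
Qed.

Lemma rank_coord_plane w : \rank (coord_plane w) = n.
Proof.
apply/eqP; rewrite eqn_leq rank_leq_col /=.
have := mxrankM_maxl (coord_plane w)^T (coord_plane w).
by rewrite coord_planeTK mxrank1 mxrank_tr.
Qed.

Lemma submx_coord_planeT w (v : 'rV[F]_n.+1) : (v <= (coord_plane w)^T)%MS <-> v 0 w = 0.
Proof.
split=> [/submxP[D ->] | v_w].
  rewrite mxE big1 // => p _.
  by rewrite !mxE (negbTE (neq_lift _ _)) mulr0.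
apply/submxP; exists (v *m coord_plane w); apply/matrixP => i c.
rewrite ord1 -mulmxA mxE (bigD1 c) //= coord_plane_mulT eqxx big1 => [|r /negbTE r_neq].
  by case: eqP => [->|_]; rewrite ?v_w ?mulr0 ?mulr1 ?addr0.
by rewrite coord_plane_mulT r_neq mulr0.
Qed.

Lemma coord_planeT_delta w (k : 'I_n) :
  (coord_plane w)^T *m delta_mx (lift w k) 0 = delta_mx k 0 :> 'cV[F]_n.
Proof.
by apply/matrixP => p q; rewrite coord_planeT_mul !mxE (inj_eq (@lift_inj _ w)).
Qed.

End CoordinatePlanes.

Lemma line_coord_coord_plane (F : fieldType) (w w' : 'I_4) : w != w' ->
  line_coord (K := F) (coord_plane w) (coord_plane w') ((coord_plane w)^T *m delta_mx w' 0).
Proof.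
move=> w_neq; split.
  case: (unliftP w w') w_neq => [k ->|->]; last by rewrite eqxx.
  rewrite coord_planeT_delta => _; apply/eqP => /matrixP/(_ k 0).
  by rewrite !mxE !eqxx => /eqP; rewrite oner_eq0.
move=> x; rewrite submx_coord_planeT trmx_mul trmxK trmx_delta -mulmxA -rowE.
by rewrite !mxE.
Qed.

Lemma qform_delta (F : fieldType) n (A : 'M[F]_n.+1) a b :
  qform A (delta_mx a 0) (delta_mx b 0) = A a b.
Proof. by rewrite /qform trmx_delta -rowE -colE !mxE. Qed.

Section CoordinateConfiguration.
Context {F : fieldType}.

(* For distinct [r, s < 3], [3 - r - s] is the remaining index. *)
Definition quadric_entry (x : nat -> F) (r s : nat) : F :=
  if r == s then 1 else if (r == 3) || (s == 3) then 0 else x (3 - r - s)%N.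

Definition quadric_mx x : 'M[F]_4 := \matrix_(r, s) quadric_entry x r s.

Definition conic_entry (y : F) (p q : nat) : F :=
  if p == q then 1 else if (p == 2) || (q == 2) then 0 else y.

Definition conic_mx y : 'M[F]_3 := \matrix_(p, q) conic_entry y p q.

Definition plane (i : 'I_3) : 'M[F]_(4,3) := coord_plane (lift ord_max i).

Lemma quadric_mx_sym x : (quadric_mx x)^T = quadric_mx x.
Proof. by apply/matrixP => r s; rewrite !mxE /quadric_entry eq_sym orbC subnAC. Qed.

Lemma conic_mx_sym y : (conic_mx y)^T = conic_mx y.
Proof. by apply/matrixP => p q; rewrite !mxE /conic_entry eq_sym orbC. Qed.

Lemma det_mx33 (g : nat -> nat -> F) :
  \det (\matrix_(p < 3, q < 3) g p q) =
    g 0 0 * (g 1 1 * g 2 2 - g 1 2 * g 2 1)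
  - g 0 1 * (g 1 0 * g 2 2 - g 1 2 * g 2 0)
  + g 0 2 * (g 1 0 * g 2 1 - g 1 1 * g 2 0).
Proof.
rewrite (expand_det_row _ ord0) !big_ord_recr big_ord0 /= /cofactor.
rewrite !(expand_det_row _ ord0) !big_ord_recr big_ord0 /= /cofactor.
by rewrite !det_mx11 !mxE !big_ord0 /bump /=; ring.
Qed.

Lemma det_conic_mx y : \det (conic_mx y) = 1 - y ^+ 2.
Proof. by rewrite det_mx33 /conic_entry /=; ring. Qed.

Lemma det_quadric_mx x :
  \det (quadric_mx x) = 1 + 2 * (x 0 * x 1 * x 2) - x 0 ^+ 2 - x 1 ^+ 2 - x 2 ^+ 2.
Proof.
rewrite (expand_det_col _ ord_max) !big_ord_recr big_ord0 /= /cofactor !mxE /=.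
have -> : row' ord_max (col' ord_max (quadric_mx x)) =
    \matrix_(p < 3, q < 3) quadric_entry x p q.
  by apply/matrixP => p q; rewrite !mxE !lift_max.
by rewrite det_mx33 /quadric_entry /= !mul0r !add0r; ring.
Qed.

Lemma adj_conic_mx y (p q : 'I_3) : (p < 2)%N -> (q < 2)%N ->
  \adj (conic_mx y) p q = if p == q then 1 else - y.
Proof.
case: p q => [[|[|//]] ?] [[|[|//]] ?] _ _;
  rewrite mxE /cofactor (expand_det_row _ ord0) !big_ord_recr big_ord0 /= /cofactor;
  by rewrite !det_mx11 !mxE /bump /conic_entry /=; ring.
Qed.

Lemma plane_restrict_quadric x i : (plane i)^T *m quadric_mx x *m plane i = conic_mx (x i).
Proof.
apply/matrixP => p q; rewrite mul_coord_plane coord_planeT_mul !mxE.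
by case: i p q => [[|[|[|//]]] ?] [[|[|[|//]]] ?] [[|[|[|//]]] ?].
Qed.

Definition line_vec (i j : 'I_3) : 'cV[F]_3 := (plane i)^T *m delta_mx (lift ord_max j) 0.

Lemma plane_line_index {i j : 'I_3} : i != j ->
  exists2 k : 'I_3, lift (lift ord_max i) k = lift ord_max j & (k < 2)%N.
Proof.
rewrite -(inj_eq (@lift_inj _ ord_max)).
case: (unliftP (lift ord_max i) (lift ord_max j)) => [k E _|->]; last by rewrite eqxx.
exists k => //; move/(congr1 val): E => /=; rewrite /bump; case: i j => i ? [j ?] /=; lia.
Qed.

Lemma line_vecE {i j k : 'I_3} :
  lift (lift ord_max i) k = lift ord_max j -> line_vec i j = delta_mx k 0.
Proof. by rewrite /line_vec => <-; rewrite coord_planeT_delta. Qed.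

Lemma alpha2_conic_mx y (a b : 'I_3) : (a < 2)%N -> (b < 2)%N -> a != b ->
  alpha2 (conic_mx y) (delta_mx a 0) (delta_mx b 0) = y ^+ 2.
Proof.
move=> a_lt b_lt a_neq_b; rewrite /alpha2 !qform_delta !adj_conic_mx // !eqxx.
by rewrite (negbTE a_neq_b) mulr1 divr1 sqrrN.
Qed.

Definition alpha2_realizable (a : 'I_3 -> F) : Prop :=
  exists (Q : 'M[F]_4) (M : 'I_3 -> 'M[F]_(4,3)) (Cm : 'I_3 -> 'M[F]_3)
         (l : 'I_3 -> 'I_3 -> 'cV[F]_3),
    [/\ nondeg_quadric Q,
        (forall i, plane_conic (M i) (Cm i) /\ conic_on_quadric Q (M i) (Cm i)),
        (forall i j, i != j -> line_coord (M i) (M j) (l i j)),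
        (forall i j, i != j -> qform (\adj (Cm i)) (l i j) (l i j) != 0) &
        (forall i, alpha2 (Cm i) (l i (ordS i)) (l i (ordS (ordS i))) = a i)].

Lemma alpha2_realizable_coordinate (x : nat -> F) :
  (forall i : 'I_3, 1 - x i ^+ 2 != 0) -> \det (quadric_mx x) != 0 ->
  alpha2_realizable (fun i => x i ^+ 2).
Proof.
move=> conic_nondeg quadric_nondeg.
exists (quadric_mx x), plane, (fun i => (plane i)^T *m quadric_mx x *m plane i), line_vec.
split.
- by split; [exact: quadric_mx_sym | ].
- move=> i; rewrite plane_restrict_quadric; split.
    by split; [exact: rank_coord_plane | rewrite conic_mx_sym det_conic_mx].
  by move=> v; rewrite /qform -plane_restrict_quadric trmx_mul !mulmxA.
- move=> i j; rewrite -(inj_eq (@lift_inj _ ord_max)).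
  exact: line_coord_coord_plane.
- move=> i j /plane_line_index[k /line_vecE -> k_lt].
  by rewrite plane_restrict_quadric qform_delta adj_conic_mx // eqxx oner_eq0.
- move=> i; rewrite plane_restrict_quadric.
  have ordS_neq (j : 'I_3) : j != ordS j by case: j => [[|[|[|]]] ?].
  have ordSS_neq (j : 'I_3) : j != ordS (ordS j) by case: j => [[|[|[|]]] ?].
  have [k Ek k_lt] := plane_line_index (ordS_neq i).
  have [k' Ek' k'_lt] := plane_line_index (ordSS_neq i).
  rewrite (line_vecE Ek) (line_vecE Ek'); apply: alpha2_conic_mx => //.
  apply: contra (ordS_neq (ordS i)) => /eqP k_eq.
  by apply/eqP/(@lift_inj _ ord_max); rewrite -Ek -Ek' k_eq.
Qed.

End CoordinateConfiguration.

Lemma small_exprn (R : realFieldType) (a : R) n :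
  0 <= a -> 3 * a <= 1 -> (0 < n)%N -> 0 <= a ^+ n /\ 3 * a ^+ n <= 1.
Proof.
move=> a_ge0 a_small n_gt0; have a_le1 : a <= 1 by lra.
split; first exact: exprn_ge0.
by apply: le_trans a_small; rewrite ler_pM2l ?ltr0n // ler_iXnr.
Qed.

Lemma small_conic_det_gt0 (R : realFieldType) (a : R) :
  0 <= a -> 3 * a <= 1 -> 0 < 1 - a ^+ 2.
Proof. by move=> a_ge0 a_small; nra. Qed.

Lemma small_quadric_det_gt0 (R : realFieldType) (a b c : R) :
  0 <= a -> 3 * a <= 1 -> 0 <= b -> 3 * b <= 1 -> 0 <= c -> 3 * c <= 1 ->
  0 < 1 + 2 * (a * b * c) - a ^+ 2 - b ^+ 2 - c ^+ 2.
Proof.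
move=> a_ge0 a_small b_ge0 b_small c_ge0 c_small.
have abc_ge0 : 0 <= a * b * c by rewrite !mulr_ge0.
have [a2 b2 c2] : [/\ 9 * a ^+ 2 <= 1, 9 * b ^+ 2 <= 1 & 9 * c ^+ 2 <= 1] by split; nra.
lra.
Qed.

Lemma alpha2_realizable_small_squares (R : rcfType) (y : nat -> R) :
  (forall n, 0 <= y n /\ 3 * y n <= 1) -> alpha2_realizable (fun i => (y i)%:C%C ^+ 2).
Proof.
move=> y_small; pose x n := (y n)%:C%C.
have real_neq0 (a : R) : 0 < a -> a%:C%C != 0 by move=> a_gt0; rewrite fmorph_eq0 gt_eqF.
have conic_nondeg (i : 'I_3) : 1 - x i ^+ 2 != 0.
  have [y_ge0 y_le] := y_small i.
  have -> : 1 - x i ^+ 2 = (1 - y i ^+ 2)%:C%C by rewrite rmorphB rmorph1 rmorphXn.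
  exact/real_neq0/small_conic_det_gt0.
have quadric_nondeg : \det (quadric_mx x) != 0.
  have -> : \det (quadric_mx x) =
      (1 + 2 * (y 0 * y 1 * y 2) - y 0 ^+ 2 - y 1 ^+ 2 - y 2 ^+ 2)%:C%C.
    rewrite det_quadric_mx /x; move: (y 0) (y 1) (y 2) => a b c.
    by rewrite !(rmorphB, rmorphD, rmorphM, rmorphXn, rmorph1, rmorph_nat).
  have [[y0_ge0 y0_le] [y1_ge0 y1_le] [y2_ge0 y2_le]] :=
    And3 (y_small 0) (y_small 1) (y_small 2).
  exact/real_neq0/small_quadric_det_gt0.
exact: alpha2_realizable_coordinate x conic_nondeg quadric_nondeg.
Qed.

Theorem mainTheorem4 (R : realType) (P : {mpoly R[i][3]}) :
  P != 0 ->
  exists (Q : 'M[R[i]]_4) (M : 'I_3 -> 'M[R[i]]_(4,3)) (Cm : 'I_3 -> 'M[R[i]]_3)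
         (l : 'I_3 -> 'I_3 -> 'cV[R[i]]_3),
    [/\ nondeg_quadric Q,
        (forall i, plane_conic (M i) (Cm i) /\ conic_on_quadric Q (M i) (Cm i)),
        (forall i j, i != j -> line_coord (M i) (M j) (l i j)),
        (forall i j, i != j -> qform (\adj (Cm i)) (l i j) (l i j) != 0) &
        P.@[fun i => alpha2 (Cm i) (l i (ordS i)) (l i (ordS (ordS i)))] != 0].
Proof.
move=> P_neq0; pose s k : R := (k + 3)%:R^-1.
have s_gt0 k : 0 < s k by rewrite invr_gt0 ltr0n addn3.
have s_small k : 3 * s k <= 1 by rewrite ler_pdivrMr ?ltr0n ?addn3 // mul1r ler_nat; lia.
have s2_inj : injective (fun k => (s k ^+ 2)%:C%C).
  move=> a b /complexI/eqP; rewrite eqrXn2 ?ltW // => /eqP/invr_inj/eqP.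
  by rewrite eqr_nat eqn_add2r => /eqP.
have [k Pk_neq0] := meval_geometric_neq0 _ _ s2_inj P_neq0.
have D_gt0 : (0 < msize P)%N by rewrite lt0n msize_poly_eq0.
pose y n := s k ^+ (msize P ^ n).
have y_small n : 0 <= y n /\ 3 * y n <= 1.
  by apply: small_exprn; rewrite ?expn_gt0 ?D_gt0 ?(ltW (s_gt0 k)).
have [Q [M [Cm [l [? ? ? ? alphaE]]]]] := alpha2_realizable_small_squares _ _ y_small.
exists Q, M, Cm, l; split => //.
rewrite (meval_eq _ alphaE); congr (_ != 0): Pk_neq0; apply: meval_eq => i.
by rewrite /y -!rmorphXn -!exprM mulnC.
Qed.
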